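(* Let $T(n) = (3n+1)/2^{v_2(3n+1)}$ for odd $n\ge1$, let $n_0$ be an odd positive integer with orbit $n_{t+1} = T(n_t)$, and let $X_t = \mathbf{1}[n_t \equiv 1 \pmod 4]$. Let $t \ge 1$ be a burst-to-gap transition, i.e. $X_{t-1} = 1$ and $X_t = 0$, and let $G \ge 1$ be the length of the gap run starting at $t$ (the number of consecutive indices $s \ge t$ with $X_s = 0$). Then $n_t \equiv 3 \pmod 4$, and moreover: (a) $G = 1$ if and only if $n_t \equiv 3 \pmod 8$; (b) $G \ge 2$ if and only if $n_t \equiv 7 \pmod 8$.
   Context: $v_2$ denotes the $2$-adic valuation. $X_t = 1$ is called a burst step and $X_t = 0$ a gap step; equivalently $X_t = \mathbf{1}[v_2(3n_t+1)\ge 2]$. *)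

From mathcomp Require Import all_boot.

Definition v2 (m : nat) : nat := logn 2 m.

Definition syrT (n : nat) : nat := (3 * n + 1) %/ 2 ^ (v2 (3 * n + 1)).

Definition syr_orbit (n0 t : nat) : nat := iter t syrT n0.

Definition burst (n0 t : nat) : bool := syr_orbit n0 t %% 4 == 1.

(* Along the orbit every n_t is odd, so a gap step means n_t = 3 (mod 4).  Then
   3 n_t + 1 = 2 (odd), hence n_{t+1} = (3 n_t + 1) / 2, and writing
   n_t = 8 k + r gives n_{t+1} = 12 k + 5 (r = 3) or 12 k + 11 (r = 7): the next
   step is a burst exactly when n_t = 3 (mod 8).  The gap run has length 1
   exactly when step t + 1 is a burst. *)

From mathcomp Require Import all_boot.
From mathcomp Require Import zify.

Lemma odd_divn_pfactor2 m : 0 < m -> odd (m %/ 2 ^ logn 2 m).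
Proof.
move=> m_gt0; have [k odd_k def_m] := pfactor_coprime (isT : prime 2) m_gt0.
by rewrite {1}def_m mulnK ?expn_gt0 // -coprime2n.
Qed.

Lemma odd_syrT n : odd (syrT n).
Proof. by apply: odd_divn_pfactor2; rewrite addn1. Qed.

Lemma odd_syr_orbit n0 t : odd n0 -> odd (syr_orbit n0 t).
Proof. by case: t => [|t] //= _; apply: odd_syrT. Qed.

Lemma v2_double_odd m : odd m -> v2 (2 * m) = 1.
Proof. by move=> odd_m; rewrite /v2 mulnC logn_Gauss ?coprime2n // logn_prime. Qed.

Lemma syrT_mod4_3 n : n %% 4 = 3 -> syrT n = (3 * n + 1) %/ 2.
Proof.
move=> n_mod4.
have def_3n1 : 3 * n + 1 = 2 * (6 * (n %/ 4) + 5).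
  by rewrite {1}(divn_eq n 4) n_mod4; lia.
have odd_half : odd (6 * (n %/ 4) + 5) by rewrite oddD oddM.
by rewrite /syrT def_3n1 v2_double_odd.
Qed.

Lemma syrT_burst_mod8 n :
  n %% 4 = 3 -> (syrT n %% 4 == 1) = (n %% 8 == 3).
Proof. by move=> n_mod4; rewrite syrT_mod4_3 //; apply/eqP/eqP; lia. Qed.

Lemma gap_run_length1 {n0 t G : nat} :
  1 <= G -> (forall s, t <= s < t + G -> ~~ burst n0 s) ->
  burst n0 (t + G) -> (G == 1) = burst n0 t.+1.
Proof.
move=> G_gt0 gap_run burst_end.
have [G1 | G_neq1] := eqVneq G 1.
  by move: burst_end; rewrite G1 addn1 => ->.
apply/esym/negbTE/gap_run; lia.
Qed.

Theorem lemma4p1 (n0 t G : nat) :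
  odd n0 -> 0 < n0 ->
  1 <= t -> burst n0 t.-1 -> ~~ burst n0 t ->
  1 <= G ->
  (forall s, t <= s < t + G -> ~~ burst n0 s) ->
  burst n0 (t + G) ->
  syr_orbit n0 t %% 4 = 3 /\
  (G = 1 <-> syr_orbit n0 t %% 8 = 3) /\
  (2 <= G <-> syr_orbit n0 t %% 8 = 7).
Proof.
move=> odd_n0 _ _ _ gap_t G_gt0 gap_run burst_end.
have odd_nt := odd_syr_orbit n0 t odd_n0.
set n := syr_orbit n0 t in odd_nt gap_t *.
have n_mod2 : n %% 2 = 1 by rewrite modn2 odd_nt.
have n_mod4 : n %% 4 = 3 by move: gap_t; rewrite /burst -/n => /eqP; lia.
have G1_mod8 : G = 1 <-> n %% 8 = 3.
  have burst_next : burst n0 t.+1 = (syrT n %% 4 == 1) by [].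
  rewrite (rwP eqP) (rwP (_ =P 3)) -syrT_burst_mod8 // -burst_next.
  by rewrite (gap_run_length1 G_gt0 gap_run burst_end).
by split=> //; split; split; move: G1_mod8; lia.
Qed.
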